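(* Let $v_1,v_2\in L_2(0,1)$ be complex-valued, and for $\psi\in W_2^1(0,1)$ define $$A\psi(x)=i\psi'(x)+v_1(x)\Big[\psi(0)-\tfrac{i}{2}\langle\psi,v_1\rangle\Big]+v_2(x)\Big[\psi(1)+\tfrac{i}{2}\langle\psi,v_2\rangle\Big].$$ Then for all $\psi,\varphi\in W_2^1(0,1)$, $$\langle A\psi,\varphi\rangle-\langle\psi,A\varphi\rangle=i\Big\{\big[\psi(1)+i\langle\psi,v_2\rangle\big]\overline{\big[\varphi(1)+i\langle\varphi,v_2\rangle\big]}-\big[\psi(0)-i\langle\psi,v_1\rangle\big]\overline{\big[\varphi(0)-i\langle\varphi,v_1\rangle\big]}\Big\}.$$
   Context: $\langle f,g\rangle=\int_0^1 f(x)\overline{g(x)}\,dx$ is the inner product of $L_2(0,1)$; $W_2^1(0,1)$ is the Sobolev space. *)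

From HB Require Import structures.
From mathcomp Require Import all_boot all_order all_algebra.
From mathcomp Require Import all_classical all_reals all_analysis.
From mathcomp Require Import complex.
Set Implicit Arguments. Unset Strict Implicit. Unset Printing Implicit Defensive.
Import Order.TTheory GRing.Theory Num.Theory.
Local Open Scope ring_scope.
Local Open Scope classical_set_scope.
Local Open Scope complex_scope.

Definition Icc (R : realType) (a b : R) : set R := `[a, b].

Definition reF (R : realType) (f : R -> R[i]) : R -> R := fun x => complex.Re (f x).
Definition imF (R : realType) (f : R -> R[i]) : R -> R := fun x => complex.Im (f x).

Definition cint (R : realType) (D : set R) (f : R -> R[i]) : R[i] :=
  Complex (Rintegral (@lebesgue_measure R) D (reF f))
          (Rintegral (@lebesgue_measure R) D (imF f)).

Definition L2 (R : realType) (f : R -> R[i]) : Prop :=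
  measurable_fun (Icc 0 1) (reF f) /\
  measurable_fun (Icc 0 1) (imF f) /\
  (@lebesgue_measure R).-integrable (Icc 0 1)
     (fun x => ((reF f x) ^+ 2 + (imF f x) ^+ 2)%:E).

Definition inner (R : realType) (f g : R -> R[i]) : R[i] :=
  cint (Icc 0 1) (fun x => f x * conjc (g x)).

(* psi belongs to W_2^1(0,1) with (weak) derivative dpsi in L_2(0,1):
   psi is absolutely continuous with psi(x) = psi(0) + \int_0^x dpsi on [0,1]. *)
Definition W21 (R : realType) (psi dpsi : R -> R[i]) : Prop :=
  L2 dpsi /\
  forall x : R, 0 <= x <= 1 -> psi x = psi 0 + cint (Icc 0 x) dpsi.

Definition Aop (R : realType) (v1 v2 psi dpsi : R -> R[i]) : R -> R[i] :=
  fun x => 'i * dpsi x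
           + v1 x * (psi 0 - 'i / 2%:R * inner psi v1)
           + v2 x * (psi 1 + 'i / 2%:R * inner psi v2).

From HB Require Import structures.
From mathcomp Require Import all_boot all_order all_algebra.
From mathcomp Require Import all_classical all_reals all_analysis.
From mathcomp Require Import complex.
From mathcomp Require Import ring lra.
From mathcomp Require Import measurable_realfun.
Import Order.TTheory GRing.Theory Num.Theory.
Import numFieldNormedType.Exports.
Local Open Scope ring_scope.
Local Open Scope classical_set_scope.
(* The derivative terms of A produce the boundary form: since
   <i psi', phi> - <psi, i phi'> = i (<psi', phi> + <psi, phi'>), integration by
   parts turns them into i [psi(1) conj(phi(1)) - psi(0) conj(phi(0))], and the
   rank-one terms supply exactly the remaining cross terms, so the identity is then
   algebra in C.  For psi = psi(0) + \int_0^x psi' with psi' merely integrable,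
   integration by parts is Fubini's theorem for h(x) g(t) on the triangle t < x of
   [0,1]^2; the same Fubini argument shows that h psi is integrable for every
   integrable h, which is what allows the inner products to be split linearly. *)

Section integrable_EFin.
Context {d : measure_display} {T : measurableType d} {R : realType}.
Context {mu : measure T R} {D : set T}.
Hypothesis mD : measurable D.

Lemma integrableD_EFin {f g : T -> R} :
  mu.-integrable D (EFin \o f) -> mu.-integrable D (EFin \o g) ->
  mu.-integrable D (EFin \o (fun x => f x + g x)).
Proof.
move=> fi gi; apply: (eq_integrable mD _ _ _ (integrableD mD fi gi)) => x _.
by rewrite /= EFinD.
Qed.

Lemma integrableZl_EFin (c : R) {f : T -> R} :
  mu.-integrable D (EFin \o f) -> mu.-integrable D (EFin \o (fun x => c * f x)).
Proof.
move=> fi; apply: (eq_integrable mD _ _ _ (integrableZl mD c fi)) => x _.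
by rewrite /= EFinM.
Qed.

Lemma integrableB_EFin {f g : T -> R} :
  mu.-integrable D (EFin \o f) -> mu.-integrable D (EFin \o g) ->
  mu.-integrable D (EFin \o (fun x => f x - g x)).
Proof.
move=> fi /(integrableZl_EFin (-1)) gi.
by apply: (eq_integrable mD _ _ _ (integrableD_EFin fi gi)) => x _; rewrite /= mulN1r.
Qed.

End integrable_EFin.

Section triangle_fubini.
Context {R : realType} {a b : R}.
Notation mu := (@lebesgue_measure R).
Let D : set R := `[a, b].
Let mD : measurable (D : set (measurableTypeR R)) := measurable_itv _.
Let lt_set : set (R * R) := [set z | z.2 < z.1].

Let patch_indicE (f : R -> R) (B : set R) :
  (fun x => ((f \_ D) x * \1_B x)%:E) = (EFin \o f) \_ (D `&` B).
Proof.
apply/funext => x; rewrite !patchE /indic /= in_setI.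
by case: (x \in D); case: (x \in B); rewrite /= ?mulr1 ?mulr0 ?mul0r.
Qed.

Lemma integrable_patch_indic (f : R -> R) (B : set R) : measurable B ->
  mu.-integrable D (EFin \o f) ->
  mu.-integrable setT (fun x => ((f \_ D) x * \1_B x)%:E).
Proof.
move=> mB fi; rewrite patch_indicE.
apply/integrable_restrict => //; first exact: measurableI.
by rewrite setTI; apply: integrableS fi => //; exact: measurableI.
Qed.

Lemma integral_patch_indic (f : R -> R) (B : set R) : measurable B ->
  mu.-integrable D (EFin \o f) ->
  (\int[mu]_x ((f \_ D) x * \1_B x)%:E = (\int[mu]_(x in D `&` B) f x)%:E)%E.
Proof.
move=> mB fi; have mDB := measurableI _ _ mD mB.
rewrite patch_indicE -integral_mkcond /Rintegral fineK //.
by apply: integrable_fin_num => //; apply: integrableS fi.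
Qed.

Lemma measurable_lt_set : measurable lt_set.
Proof.
have msub : measurable_fun setT (fun z : R * R => z.1 - z.2).
  exact: measurable_funB measurable_fst measurable_snd.
have := msub measurableT _ (measurable_itv `]0, +oo[%R).
rewrite setTI; congr measurable; apply/seteqP; split => z /=;
  by rewrite in_itv /= andbT subr_gt0.
Qed.

Lemma indic_lt_set_fst (x y : R) : \1_lt_set (x, y) = \1_(`]-oo, x[) y :> R.
Proof. by []. Qed.

Lemma indic_lt_set_snd (x y : R) : \1_lt_set (x, y) = \1_(`]y, +oo[) x :> R.
Proof.
rewrite /indic; suff -> : ((x, y) \in lt_set) = (x \in `]y, +oo[) by [].
by apply/idP/idP => /set_mem yx; apply/mem_set; move: yx; rewrite /= in_itv /= andbT.
Qed.

Lemma measurable_patch {f : R -> R} : mu.-integrable D (EFin \o f) ->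
  measurable_fun setT (f \_ D).
Proof.
move=> fi; apply/measurable_restrict => //; rewrite setTI.
by apply/measurable_EFinP; exact: measurable_int fi.
Qed.

Lemma integral_abs_patch_fin_num {f : R -> R} : mu.-integrable D (EFin \o f) ->
  (\int[mu]_x `|(f \_ D) x|%:E)%E \is a fin_num.
Proof.
move=> fi; rewrite ge0_fin_numE; last exact: integral_ge0.
have : mu.-integrable setT (EFin \o (f \_ D)).
  by rewrite -restrict_EFin; apply/integrable_restrict => //; rewrite setTI.
by case/integrableP.
Qed.

Lemma setI_Icc_ltr x : x \in D -> D `&` `]-oo, x[ = `[a, x[.
Proof.
move/set_mem; rewrite /D /= in_itv /= => /andP[ax xb].
apply/seteqP; split => z /=; rewrite !in_itv /=; first by move=> [/andP[-> _] ->].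
by move=> /andP[az zx]; rewrite az (le_trans (ltW zx)).
Qed.

Lemma setI_Icc_gtr y : y \in D -> D `&` `]y, +oo[ = `]y, b].
Proof.
move/set_mem; rewrite /D /= in_itv /= => /andP[ay yb].
apply/seteqP; split => z /=; rewrite !in_itv /= ?andbT; first by move=> [/andP[_ ->] ->].
by move=> /andP[yz zb]; rewrite zb (le_trans ay) // ltW.
Qed.

Section kernel.
Context {h g : R -> R}.
Hypotheses (hi : mu.-integrable D (EFin \o h)) (gi : mu.-integrable D (EFin \o g)).

Let k (z : R * R) := ((h \_ D) z.1 * (g \_ D) z.2 * \1_lt_set z)%:E.

Let kE1 x y : k (x, y) = ((h \_ D) x * ((g \_ D) y * \1_(`]-oo, x[) y))%:E.
Proof. by rewrite /k /= indic_lt_set_fst mulrA. Qed.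

Let kE2 x y : k (x, y) = ((g \_ D) y * ((h \_ D) x * \1_(`]y, +oo[) x))%:E.
Proof. by rewrite /k /= indic_lt_set_snd [(h \_ D) x * _]mulrC -mulrA. Qed.

Let measurable_k : measurable_fun setT k.
Proof.
apply/measurable_EFinP; apply: measurable_funM; last exact: measurable_indic measurable_lt_set.
apply: measurable_funM.
  exact: measurableT_comp (measurable_patch hi) measurable_fst.
exact: measurableT_comp (measurable_patch gi) measurable_snd.
Qed.

Lemma integrable_triangle_kernel : (mu \x mu)%E.-integrable setT k.
Proof.
have mh := measurable_patch hi; have mg := measurable_patch gi.
have mabs (f : R -> R) : measurable_fun setT f ->
    measurable_fun setT (fun y => `|f y|%:E).
  by move=> mf; apply/measurable_EFinP; exact: measurableT_comp mf.
apply/integrable12ltyP => //.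
set cg := fine (\int[mu]_y `|(g \_ D) y|%:E).
have cgE : (\int[mu]_y `|(g \_ D) y|%:E)%E = cg%:E.
  by rewrite fineK // (integral_abs_patch_fin_num gi).
apply: (@le_lt_trans _ _ (\int[mu]_x (`|(h \_ D) x| * cg)%:E)%E).
  apply: ge0_le_integral => //.
  - by move=> x _; apply: integral_ge0.
  - apply: (@measurable_fun_fubini_tonelli_F _ _ _ _ _ mu (fun z => `|k z|%E)) => //.
    exact: measurableT_comp measurable_k.
  - by apply/measurable_EFinP; apply: measurable_funM => //; exact: measurableT_comp mh.
  move=> x _; rewrite EFinM -cgE -ge0_integralZl //; last exact: mabs.
  apply: ge0_le_integral => //.
  - under eq_fun do rewrite kE1.
    apply: (measurableT_comp (@abse_measurable R setT)); apply/measurable_EFinP.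
    by apply: measurable_funM => //; apply: measurable_funM.
  - by apply: measurable_funeM; exact: mabs.
  move=> y _; rewrite kE1 abse_EFin -EFinM lee_fin !normrM ler_wpM2l //.
  by rewrite /indic; case: (y \in _); rewrite /= ?normr1 ?normr0 ?mulr1 ?mulr0.
under eq_integral do rewrite EFinM.
rewrite ge0_integralZr //; last by rewrite lee_fin fine_ge0 // integral_ge0.
  rewrite -[X in (X * _)%E]/(\int[mu]_x `|(h \_ D) x|%:E)%E.
  by rewrite -(fineK (integral_abs_patch_fin_num hi)) -EFinM ltry.
by apply: mabs.
Qed.

Lemma integral_triangle_kernel_snd x : (\int[mu]_y k (x, y))%E =
  (((fun x => h x * \int[mu]_(t in `[a, x]) g t) \_ D) x)%:E.
Proof.
under eq_integral do rewrite kE1 EFinM.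
have mB : measurable `]-oo, x[ by exact: measurable_itv.
rewrite integralZl //; last exact: integrable_patch_indic.
rewrite integral_patch_indic // -EFinM !patchE.
case: (boolP (x \in D)) => xD; last by rewrite mul0r.
rewrite setI_Icc_ltr // Rintegral_itv_bndo_bndc //.
apply: integrableS gi => //; apply: subset_itv; rewrite bnd_simp //.
by move/set_mem: xD; rewrite /D /= in_itv /= => /andP[].
Qed.

Lemma integral_triangle_kernel_fst y : (\int[mu]_x k (x, y))%E =
  (((fun t => g t * \int[mu]_(x in `]t, b]) h x) \_ D) y)%:E.
Proof.
under eq_integral do rewrite kE2 EFinM.
have mB : measurable `]y, +oo[ by exact: measurable_itv.
rewrite integralZl //; last exact: integrable_patch_indic.
rewrite integral_patch_indic // -EFinM !patchE.
by case: (boolP (y \in D)) => yD; rewrite ?mul0r ?setI_Icc_gtr.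
Qed.

Lemma integrable_mul_primitive :
  mu.-integrable D (EFin \o (fun x => h x * \int[mu]_(t in `[a, x]) g t)).
Proof.
rewrite -(setTI D); apply/integrable_restrict => //; rewrite restrict_EFin.
apply: (eq_integrable measurableT _ _ _ (integrable_fubini_F integrable_triangle_kernel)).
by move=> x _; rewrite /fubini_F integral_triangle_kernel_snd.
Qed.

Lemma integral_mul_primitive_swap :
  \int[mu]_(x in D) (h x * \int[mu]_(t in `[a, x]) g t) =
  \int[mu]_(t in D) (g t * \int[mu]_(x in `]t, b]) h x).
Proof.
rewrite /Rintegral integral_mkcond [in RHS]integral_mkcond; congr fine.
transitivity (\int[mu]_x \int[mu]_y k (x, y))%E.
  by apply: eq_integral => x _; rewrite integral_triangle_kernel_snd !patchE; case: (x \in D).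
rewrite (Fubini integrable_triangle_kernel); apply: eq_integral => y _.
by rewrite integral_triangle_kernel_fst !patchE; case: (y \in D).
Qed.

End kernel.
End triangle_fubini.

Definition primitive_on {R : realType} (a b : R) (F f : R -> R) : Prop :=
  forall x, a <= x <= b -> F x = F a + \int[lebesgue_measure]_(t in `[a, x]) f t.

Section integration_by_parts.
Context {R : realType} {a b : R}.
Notation mu := (@lebesgue_measure R).
Let D : set R := `[a, b].
Let mD : measurable (D : set (measurableTypeR R)) := measurable_itv _.

Let memD x : x \in D -> a <= x <= b.
Proof. by move/set_mem; rewrite /D /= in_itv. Qed.

Lemma integrable_mul_primitive_on {h G g : R -> R} :
  mu.-integrable D (EFin \o h) -> mu.-integrable D (EFin \o g) ->
  primitive_on a b G g -> mu.-integrable D (EFin \o (fun x => h x * G x)).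
Proof.
move=> hi gi Gg.
have := integrableD_EFin mD (integrableZl_EFin mD (G a) hi) (integrable_mul_primitive hi gi).
apply: eq_integrable => // x /memD/Gg Gx; rewrite /= Gx; congr EFin; ring.
Qed.

Hypothesis ab : a <= b.

Lemma Rintegral_by_parts {f g F G : R -> R} :
  mu.-integrable D (EFin \o f) -> mu.-integrable D (EFin \o g) ->
  primitive_on a b F f -> primitive_on a b G g ->
  \int[mu]_(x in D) (f x * G x) + \int[mu]_(x in D) (g x * F x) =
  F b * G b - F a * G a.
Proof.
move=> fi gi Ff Gg.
have fGi := integrable_mul_primitive fi gi; have gFi := integrable_mul_primitive gi fi.
set If := \int[mu]_(x in D) f x; set Ig := \int[mu]_(x in D) g x.
have Fb : F b = F a + If by rewrite Ff ?lexx ?ab.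
have Gb : G b = G a + Ig by rewrite Gg ?lexx ?ab.
have E1 : \int[mu]_(x in D) (f x * G x) =
    G a * If + \int[mu]_(x in D) (f x * \int[mu]_(t in `[a, x]) g t).
  rewrite -RintegralZl // -RintegralD //; last exact: (integrableZl_EFin mD).
  by apply: eq_Rintegral => x /memD/Gg ->; ring.
have E2 : \int[mu]_(x in D) (g x * F x) =
    F a * Ig + \int[mu]_(x in D) (g x * \int[mu]_(t in `[a, x]) f t).
  rewrite -RintegralZl // -RintegralD //; last exact: (integrableZl_EFin mD).
  by apply: eq_Rintegral => x /memD/Ff ->; ring.
have E3 : \int[mu]_(x in D) (f x * \int[mu]_(t in `[a, x]) g t) =
    If * Ig - \int[mu]_(x in D) (g x * \int[mu]_(t in `[a, x]) f t).
  rewrite integral_mul_primitive_swap // -RintegralZl // -RintegralB //;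
    last exact: (integrableZl_EFin mD).
  apply: eq_Rintegral => x /memD/andP[ax xb].
  by rewrite -(Rintegral_itvB fi) ?bnd_simp //; rewrite /If /D; ring.
by rewrite E1 E2 E3 Fb Gb; ring.
Qed.

End integration_by_parts.

Local Open Scope complex_scope.

Section complex_components.
Context {R : realType}.
Implicit Types f g : R -> R[i].

Lemma reFD f g : reF (fun x => f x + g x) = (fun x => reF f x + reF g x).
Proof. by apply/funext => x; rewrite /reF; case: (f x); case: (g x). Qed.

Lemma imFD f g : imF (fun x => f x + g x) = (fun x => imF f x + imF g x).
Proof. by apply/funext => x; rewrite /imF; case: (f x); case: (g x). Qed.

Lemma reFM f g :
  reF (fun x => f x * g x) = (fun x => reF f x * reF g x - imF f x * imF g x).
Proof. by apply/funext => x; rewrite /reF /imF; case: (f x); case: (g x). Qed.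

Lemma imFM f g :
  imF (fun x => f x * g x) = (fun x => reF f x * imF g x + imF f x * reF g x).
Proof. by apply/funext => x; rewrite /reF /imF; case: (f x); case: (g x). Qed.

Lemma reF_conj f : reF (fun x => conjc (f x)) = reF f.
Proof. by apply/funext => x; rewrite /reF; case: (f x). Qed.

Lemma imF_conj f : imF (fun x => conjc (f x)) = (fun x => -1 * imF f x).
Proof. by apply/funext => x; rewrite /imF mulN1r; case: (f x). Qed.

End complex_components.

Definition cintegrable {R : realType} (D : set R) (f : R -> R[i]) : Prop :=
  (@lebesgue_measure R).-integrable D (EFin \o reF f) /\
  (@lebesgue_measure R).-integrable D (EFin \o imF f).

Section complex_integral.
Context {R : realType} {D : set R}.
Notation mu := (@lebesgue_measure R).
Hypothesis mD : measurable (D : set (measurableTypeR R)).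
Implicit Types f g : R -> R[i].

Lemma cintegrableD {f g} : cintegrable D f -> cintegrable D g ->
  cintegrable D (fun x => f x + g x).
Proof.
by move=> [f1 f2] [g1 g2]; rewrite /cintegrable reFD imFD; split; exact: integrableD_EFin.
Qed.

Section product.
Context {f g : R -> R[i]}.
Hypotheses (rr : mu.-integrable D (EFin \o (fun x => reF f x * reF g x)))
  (ii : mu.-integrable D (EFin \o (fun x => imF f x * imF g x)))
  (ri : mu.-integrable D (EFin \o (fun x => reF f x * imF g x)))
  (ir : mu.-integrable D (EFin \o (fun x => imF f x * reF g x))).

Lemma cintegrableM : cintegrable D (fun x => f x * g x).
Proof.
by rewrite /cintegrable reFM imFM; split; [exact: integrableB_EFin | exact: integrableD_EFin].
Qed.

Lemma cintME : cint D (fun x => f x * g x) =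
  Complex (\int[mu]_(x in D) (reF f x * reF g x) - \int[mu]_(x in D) (imF f x * imF g x))
          (\int[mu]_(x in D) (reF f x * imF g x) + \int[mu]_(x in D) (imF f x * reF g x)).
Proof. by rewrite /cint reFM imFM RintegralB // RintegralD. Qed.

End product.

Lemma cintegrableZl c {f} : cintegrable D f -> cintegrable D (fun x => c * f x).
Proof. by move=> [f1 f2]; apply: cintegrableM; exact: integrableZl_EFin. Qed.

Lemma cintegrable_conj {f} : cintegrable D f -> cintegrable D (fun x => conjc (f x)).
Proof.
by move=> [f1 f2]; rewrite /cintegrable reF_conj imF_conj; split => //; exact: integrableZl_EFin.
Qed.

Lemma cintD {f g} : cintegrable D f -> cintegrable D g ->
  cint D (fun x => f x + g x) = cint D f + cint D g.
Proof. by move=> [f1 f2] [g1 g2]; rewrite /cint reFD imFD !RintegralD. Qed.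

Lemma cintZl c {f} : cintegrable D f -> cint D (fun x => c * f x) = c * cint D f.
Proof.
move=> [f1 f2]; rewrite cintME; try exact: integrableZl_EFin.
by rewrite /reF /imF !RintegralZl //; case: c.
Qed.

Lemma cint_conj {f} : cintegrable D f -> cint D (fun x => conjc (f x)) = conjc (cint D f).
Proof. by move=> [f1 f2]; rewrite /cint reF_conj imF_conj RintegralZl // mulN1r. Qed.

End complex_integral.

Definition cprimitive_on {R : realType} (a b : R) (F f : R -> R[i]) : Prop :=
  forall x, a <= x <= b -> F x = F a + cint `[a, x] f.

Section complex_integration_by_parts.
Context {R : realType} {a b : R}.
Let D : set R := `[a, b].
Let mD : measurable (D : set (measurableTypeR R)) := measurable_itv _.
Implicit Types f g F G : R -> R[i].

Lemma primitive_on_reF {F f} : cprimitive_on a b F f -> primitive_on a b (reF F) (reF f).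
Proof. by move=> Ff x /Ff; rewrite /reF => ->; case: (F a). Qed.

Lemma primitive_on_imF {F f} : cprimitive_on a b F f -> primitive_on a b (imF F) (imF f).
Proof. by move=> Ff x /Ff; rewrite /imF => ->; case: (F a). Qed.

Lemma cprimitive_on_conj {F f} : cintegrable D f -> cprimitive_on a b F f ->
  cprimitive_on a b (fun x => conjc (F x)) (fun x => conjc (f x)).
Proof.
move=> [f1 f2] Ff x /[dup] /andP[ax xb] /Ff ->.
have sub : `[a, x] `<=` D by apply: subset_itv; rewrite bnd_simp.
have fx : cintegrable `[a, x] f.
  by split; [apply: integrableS f1 | apply: integrableS f2]; rewrite //; exact: measurable_itv.
by rewrite (cint_conj (measurable_itv _) fx) rmorphD.
Qed.

Lemma cintegrable_mul_primitive_on {h G g} : cintegrable D h -> cintegrable D g ->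
  cprimitive_on a b G g -> cintegrable D (fun x => h x * G x).
Proof.
move=> [h1 h2] [g1 g2] Gg.
have rG := primitive_on_reF Gg; have iG := primitive_on_imF Gg.
by apply: (cintegrableM mD); eauto using integrable_mul_primitive_on.
Qed.

Lemma cint_by_parts {f g F G} : a <= b -> cintegrable D f -> cintegrable D g ->
  cprimitive_on a b F f -> cprimitive_on a b G g ->
  cint D (fun x => f x * G x) + cint D (fun x => g x * F x) = F b * G b - F a * G a.
Proof.
move=> ab [f1 f2] [g1 g2] Ff Gg.
have rF := primitive_on_reF Ff; have iF := primitive_on_imF Ff.
have rG := primitive_on_reF Gg; have iG := primitive_on_imF Gg.
rewrite !(cintME mD); try by eauto using integrable_mul_primitive_on.
have := Rintegral_by_parts ab f1 g1 rF rG; have := Rintegral_by_parts ab f2 g2 iF iG.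
have := Rintegral_by_parts ab f1 g2 rF iG; have := Rintegral_by_parts ab f2 g1 iF rG.
rewrite /reF /imF; case: (F a) (F b) (G a) (G b) => [Fa1 Fa2] [Fb1 Fb2] [Ga1 Ga2] [Gb1 Gb2] /=.
by move=> *; apply/eqP; rewrite eq_complex /=; apply/andP; split; apply/eqP; lra.
Qed.

End complex_integration_by_parts.

Section unit_interval.
Context {R : realType}.
Notation mu := (@lebesgue_measure R).
Let I : set R := `[0, 1].
Let mI : measurable (I : set (measurableTypeR R)) := measurable_itv _.

Lemma L2_cintegrable {v : R -> R[i]} : L2 v -> cintegrable I v.
Proof.
move=> [mre [mim v2]].
have one : mu.-integrable I (EFin \o (fun _ => 1 : R)).
  apply/integrableP; split; first exact/measurable_EFinP/measurable_cst.
  under eq_integral do rewrite /= normr1.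
  rewrite integral_cst // mul1e -[X in (X < _)%E]/(mu [set` `[0, 1]%R]).
  by rewrite lebesgue_measure_itv /= lte_fin ltr01 sube0 ltry.
have dom := integrableD_EFin mI one v2.
(* [2 |u| <= 1 + u ^ 2], so [|u| <= 1 + u ^ 2 + w ^ 2] *)
have le_dom (u w : R) : `|u| <= `|1 + (u ^+ 2 + w ^+ 2)|.
  rewrite (ger0_norm (x := 1 + _)) ?addr_ge0 ?sqr_ge0 // -(real_normK (num_real u)).
  by have := normr_ge0 u; have := sqr_ge0 w; nra.
split; apply: le_integrable dom => //; try exact/measurable_EFinP.
  by move=> x _; rewrite /= lee_fin; apply: le_dom.
by move=> x _; rewrite /= lee_fin [_ ^+ 2 + _]addrC; apply: le_dom.
Qed.

Lemma W21_cintegrable {psi dpsi : R -> R[i]} : W21 psi dpsi -> cintegrable I dpsi.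
Proof. by case=> /L2_cintegrable. Qed.

Lemma cintegrable_mul_conj_W21 {h psi dpsi : R -> R[i]} :
  cintegrable I h -> W21 psi dpsi -> cintegrable I (fun x => h x * conjc (psi x)).
Proof.
move=> hI /[dup] /W21_cintegrable dI [_ psiP].
apply: cintegrable_mul_primitive_on hI (cintegrable_conj mI dI) _.
exact: cprimitive_on_conj.
Qed.

Lemma cintegrable_W21_mul_conj {h psi dpsi : R -> R[i]} :
  cintegrable I h -> W21 psi dpsi -> cintegrable I (fun x => psi x * conjc (h x)).
Proof.
move=> hI /(cintegrable_mul_conj_W21 hI) /(cintegrable_conj mI).
by congr cintegrable; apply/funext => x; rewrite rmorphM /= conjcK mulrC.
Qed.

Lemma inner_conjC {f g : R -> R[i]} : cintegrable I (fun x => f x * conjc (g x)) ->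
  inner g f = conjc (inner f g).
Proof.
move=> fgI; rewrite /inner /Icc -(cint_conj mI fgI); congr cint.
by apply/funext => x; rewrite rmorphM /= conjcK mulrC.
Qed.

Lemma inner_by_parts {psi dpsi phi dphi : R -> R[i]} :
  W21 psi dpsi -> W21 phi dphi ->
  inner dpsi phi + inner psi dphi = psi 1 * conjc (phi 1) - psi 0 * conjc (phi 0).
Proof.
move=> /[dup] /W21_cintegrable dpsiI [_ psiP] /[dup] /W21_cintegrable dphiI [_ phiP].
have phiP' := cprimitive_on_conj dphiI phiP.
rewrite -(cint_by_parts ler01 dpsiI (cintegrable_conj mI dphiI) psiP phiP').
by rewrite /inner /Icc; congr (_ + cint _ _); apply/funext => x; rewrite mulrC.
Qed.

Section Aop.
Context {v1 v2 psi dpsi phi : R -> R[i]}.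

Lemma Aop_mul_conjE : (fun x => Aop v1 v2 psi dpsi x * conjc (phi x)) =
  (fun x => ('i * (dpsi x * conjc (phi x))
             + (psi 0 - 'i / 2%:R * inner psi v1) * (v1 x * conjc (phi x)))
            + (psi 1 + 'i / 2%:R * inner psi v2) * (v2 x * conjc (phi x))).
Proof. by apply/funext => x; rewrite /Aop; ring. Qed.

Context {dphi : R -> R[i]}.
Hypotheses (v1L2 : L2 v1) (v2L2 : L2 v2) (psiW : W21 psi dpsi) (phiW : W21 phi dphi).

Let dpsi_phiI := cintegrable_mul_conj_W21 (W21_cintegrable psiW) phiW.
Let v1_phiI := cintegrable_mul_conj_W21 (L2_cintegrable v1L2) phiW.
Let v2_phiI := cintegrable_mul_conj_W21 (L2_cintegrable v2L2) phiW.

Lemma cintegrable_Aop_mul_conj :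
  cintegrable I (fun x => Aop v1 v2 psi dpsi x * conjc (phi x)).
Proof.
by rewrite Aop_mul_conjE; do ![apply: (cintegrableD mI) | apply: (cintegrableZl mI)].
Qed.

Lemma inner_Aop : inner (Aop v1 v2 psi dpsi) phi =
  'i * inner dpsi phi + (psi 0 - 'i / 2%:R * inner psi v1) * inner v1 phi
  + (psi 1 + 'i / 2%:R * inner psi v2) * inner v2 phi.
Proof.
rewrite /inner /Icc Aop_mul_conjE !(cintD mI) ?(cintZl mI) //.
all: by do ![apply: (cintegrableD mI) | apply: (cintegrableZl mI)].
Qed.

End Aop.
End unit_interval.

Lemma i_half (R : realType) : ('i / 2%:R : R[i]) = Complex 0 (2^-1).
Proof.
apply: (@mulIf _ 2%:R); first by rewrite pnatr_eq0.
rewrite mulfVK ?pnatr_eq0 //; apply/eqP; rewrite eq_complex /=.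
by apply/andP; split; apply/eqP; rewrite ?mulr0n ?mulr1n /=; field; rewrite ?pnatr_eq0.
Qed.

Lemma boundary_form_identity (R : realType) (p0 p1 q0 q1 P1 P2 Q1 Q2 X Y : R[i]) :
  X + Y = p1 * conjc q1 - p0 * conjc q0 ->
  'i * X + (p0 - 'i / 2%:R * P1) * conjc Q1 + (p1 + 'i / 2%:R * P2) * conjc Q2
  - conjc ('i * conjc Y + (q0 - 'i / 2%:R * Q1) * conjc P1 + (q1 + 'i / 2%:R * Q2) * conjc P2)
  = 'i * ((p1 + 'i * P2) * conjc (q1 + 'i * Q2) - (p0 - 'i * P1) * conjc (q0 - 'i * Q1)).
Proof.
move=> /(canRL (addrK Y)) ->.
rewrite i_half; case: p0 p1 q0 q1 P1 P2 Q1 Q2 Y => [? ?] [? ?] [? ?] [? ?] [? ?] [? ?] [? ?] [? ?] [? ?].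
by apply/eqP; rewrite eq_complex /=; apply/andP; split; apply/eqP; field.
Qed.

Theorem lemma5p1 (R : realType) (v1 v2 psi dpsi phi dphi : R -> R[i]) :
  L2 v1 -> L2 v2 -> W21 psi dpsi -> W21 phi dphi ->
  inner (Aop v1 v2 psi dpsi) phi - inner psi (Aop v1 v2 phi dphi) =
  'i * ((psi 1 + 'i * inner psi v2) * conjc (phi 1 + 'i * inner phi v2)
        - (psi 0 - 'i * inner psi v1) * conjc (phi 0 - 'i * inner phi v1)).
Proof.
move=> v1L2 v2L2 psiW phiW.
have v1I := L2_cintegrable v1L2; have v2I := L2_cintegrable v2L2.
rewrite (inner_conjC (cintegrable_Aop_mul_conj v1L2 v2L2 phiW psiW)).
rewrite (inner_Aop v1L2 v2L2 psiW phiW) (inner_Aop v1L2 v2L2 phiW psiW).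
rewrite (inner_conjC (cintegrable_W21_mul_conj (W21_cintegrable phiW) psiW)).
rewrite (inner_conjC (cintegrable_W21_mul_conj v1I psiW)).
rewrite (inner_conjC (cintegrable_W21_mul_conj v2I psiW)).
rewrite (inner_conjC (cintegrable_W21_mul_conj v1I phiW)).
rewrite (inner_conjC (cintegrable_W21_mul_conj v2I phiW)).
exact/boundary_form_identity/inner_by_parts.
Qed.
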